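(* Consider an MDP satisfying Assumption 1(b) and a policy $\pi$ inducing an ergodic chain. Suppose there exist a function $f:S\to[0,\infty)$ and constants $c_1>0$, $c_2\ge0$ such that for all states $s$, $$\mathbb E_\pi\big[f(s_{t+1})-f(s_t)\,\big|\,s_t=s\big]\ \le\ c_1\,r(s,\pi)+c_2.$$ Then there exist constants $c_3,c_4\ge0$ (one may take $c_3=2/c_1$) such that $V_\pi(s)\ge -c_3 f(s)-c_4$ for all $s\in S$.
   Context: MDP setting: countably infinite state space $S$, finite action set $A$, transition kernel $\mathbb P(s'\mid s,a)$, reward $r(s,a)$; for a policy $\pi$, $r(s,\pi)=\sum_a\pi(a\mid s)r(s,a)$ and $(s_t)$ is the Markov chain under $\pi$. $r_{\max}(s)=\max_a r(s,a)$. Assumption 1(b): for every $z\in\mathbb R$ the set $\{s:r_{\max}(s)\ge z\}$ is finite. $J_\pi$ is the average reward of $\pi$ (expectation of $r(s,\pi)$ under the stationary distribution). A distinguished state $\vec 0$ is fixed, and the relative value function $V_\pi$ solves $J_\pi+V_\pi(s)=r(s,\pi)+\sum_{s'}\mathbb P_\pi(s'\mid s)V_\pi(s')$ with $V_\pi(\vec 0)=0$, where $\mathbb P_\pi(s'\mid s)=\sum_a\pi(a\mid s)\mathbb P(s'\mid s,a)$; equivalently $V_\pi(s)$ is the expected sum of $r(s_t,a_t)-J_\pi$ from $s_0=s$ until first hitting $\vec 0$. *)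

From HB Require Import structures.
From mathcomp Require Import all_boot all_order all_algebra.
From mathcomp Require Import all_classical all_reals all_analysis.
Set Implicit Arguments. Unset Strict Implicit. Unset Printing Implicit Defensive.
Import Order.TTheory GRing.Theory Num.Theory.
Local Open Scope classical_set_scope.
Local Open Scope ring_scope.

Definition is_kernel {R : realType} {S : countType} {A : finType}
  (P : S -> A -> S -> R) : Prop :=
  (forall s a s', 0 <= P s a s') /\
  (forall s a, \esum_(s' in [set: S]) (P s a s')%:E = 1%E).

Definition is_policy {R : realType} {S : countType} {A : finType}
  (pi : S -> A -> R) : Prop :=
  (forall s a, 0 <= pi s a) /\ (forall s, \sum_(a : A) pi s a = 1).

(* r_max(s) = max_a r(s,a)  (in \bar R, -oo for an empty action set). *)
Definition r_max {R : realType} {S : countType} {A : finType}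
  (r : S -> A -> R) (s : S) : \bar R :=
  \big[Order.max/-oo%E]_(a : A) (r s a)%:E.

Definition assumption1b {R : realType} {S : countType} {A : finType}
  (r : S -> A -> R) : Prop :=
  forall z : R, finite_set [set s : S | (z%:E <= r_max r s)%E].

Definition r_pi {R : realType} {S : countType} {A : finType}
  (r : S -> A -> R) (pi : S -> A -> R) (s : S) : R :=
  \sum_(a : A) pi s a * r s a.

Definition P_pi {R : realType} {S : countType} {A : finType}
  (P : S -> A -> S -> R) (pi : S -> A -> R) (s s' : S) : R :=
  \sum_(a : A) pi s a * P s a s'.

Fixpoint P_pi_n {R : realType} {S : countType} {A : finType}
  (P : S -> A -> S -> R) (pi : S -> A -> R) (n : nat) (x y : S) : R :=
  match n with
  | 0 => if x == y then 1 else 0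
  | n'.+1 => fine (\esum_(w in [set: S]) (P_pi_n P pi n' x w * P_pi P pi w y)%:E)
  end.

(* Taboo probabilities: taboo P pi z t x y = Pr_x(s_t = y and s_u <> z for
   all 1 <= u <= t).  Hence, with tau_z = min{t >= 1 : s_t = z},
   Pr_x(tau_z > t) = sum_y taboo P pi z t x y, and
   E_x[sum_{t < tau_z} g(s_t)] = sum_t sum_y taboo P pi z t x y * g(y). *)
Fixpoint taboo {R : realType} {S : countType} {A : finType}
  (P : S -> A -> S -> R) (pi : S -> A -> R) (z : S) (t : nat) (x y : S) : R :=
  match t with
  | 0 => if x == y then 1 else 0
  | t'.+1 => if y == z then 0 else
      fine (\esum_(w in [set: S]) (taboo P pi z t' x w * P_pi P pi w y)%:E)
  end.

(* E_x[tau_z] = sum_{t>=0} Pr_x(tau_z > t). *)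
Definition exp_return_time {R : realType} {S : countType} {A : finType}
  (P : S -> A -> S -> R) (pi : S -> A -> R) (z x : S) : \bar R :=
  \esum_(t in [set: nat]) \esum_(y in [set: S]) (taboo P pi z t x y)%:E.

Definition irreducible {R : realType} {S : countType} {A : finType}
  (P : S -> A -> S -> R) (pi : S -> A -> R) : Prop :=
  forall x y : S, exists n, 0 < P_pi_n P pi n x y.

Definition aperiodic {R : realType} {S : countType} {A : finType}
  (P : S -> A -> S -> R) (pi : S -> A -> R) : Prop :=
  forall (x : S) (d : nat),
    (forall n, 0 < P_pi_n P pi n x x -> (d %| n)%N) -> d = 1%N.

Definition positive_recurrent {R : realType} {S : countType} {A : finType}
  (P : S -> A -> S -> R) (pi : S -> A -> R) : Prop :=
  forall z : S, (exp_return_time P pi z z < +oo)%E.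

Definition ergodic {R : realType} {S : countType} {A : finType}
  (P : S -> A -> S -> R) (pi : S -> A -> R) : Prop :=
  irreducible P pi /\ aperiodic P pi /\ positive_recurrent P pi.

Definition stationary {R : realType} {S : countType} {A : finType}
  (P : S -> A -> S -> R) (pi : S -> A -> R) (mu : S -> R) : Prop :=
  (forall s, 0 <= mu s) /\
  \esum_(s in [set: S]) (mu s)%:E = 1%E /\
  (forall s', \esum_(s in [set: S]) (mu s * P_pi P pi s s')%:E = (mu s')%:E).

Definition posp {R : realType} (x : R) : R := Num.max x 0.
Definition negp {R : realType} (x : R) : R := Num.max (- x) 0.

(* Average reward J_pi = sum_s mu(s) r(s,pi)  (in \bar R; the positive part
   is always finite under Assumption 1(b)). *)
Definition avg_reward {R : realType} {S : countType} {A : finType}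
  (r : S -> A -> R) (pi : S -> A -> R) (mu : S -> R) : \bar R :=
  (\esum_(s in [set: S]) (mu s * posp (r_pi r pi s))%:E
   - \esum_(s in [set: S]) (mu s * negp (r_pi r pi s))%:E)%E.

(* Relative value function:
   V_pi(x) = E_x[ sum_{t=0}^{tau_0 - 1} (r(s_t,pi) - J) ],
   tau_0 = min{t >= 1 : s_t = s0}, written as (positive part) - (negative part). *)
Definition rel_value {R : realType} {S : countType} {A : finType}
  (P : S -> A -> S -> R) (r : S -> A -> R) (pi : S -> A -> R) (s0 : S)
  (J : R) (x : S) : \bar R :=
  (\esum_(t in [set: nat]) \esum_(y in [set: S])
      (taboo P pi s0 t x y * posp (r_pi r pi y - J))%:E
   - \esum_(t in [set: nat]) \esum_(y in [set: S])
      (taboo P pi s0 t x y * negp (r_pi r pi y - J))%:E)%E.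

(* With g the negative part of r(., pi) - J and V = (2 / c1) f, the drift
   hypothesis gives g + P0 V <= V + h, where P0 is P_pi killed on entering s0
   and h is bounded and supported on a finite superlevel set B of r_max:
   outside B the reward is so negative that the drift itself pays for g.
   Summing along the chain up to the return to s0, the negative part of
   V_pi(s) is at most V(s) plus the expected occupation of h before that
   return.  On B this occupation is finite by irreducibility and positive
   recurrence, hence bounded as B is finite, and from outside B it can only
   be smaller, since h vanishes there. *)

From HB Require Import structures.
From mathcomp Require Import all_boot all_order all_algebra.
From mathcomp Require Import all_classical all_reals all_analysis.
From mathcomp Require Import ring lra.
Set Implicit Arguments. Unset Strict Implicit. Unset Printing Implicit Defensive.
Import Order.TTheory GRing.Theory Num.Theory.
Local Open Scope classical_set_scope.
Local Open Scope ring_scope.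
Local Open Scope ereal_scope.

Section esum_lemmas.
Context {R : realType}.

Lemma esum_ge_term (T : choiceType) (a : T -> \bar R) j :
  (forall i, 0 <= a i) -> a j <= \esum_(i in [set: T]) a i.
Proof.
move=> a0; apply: esum_ge; exists [set j]; first by split => //; exact: finite_set1.
by rewrite fsbig_set1.
Qed.

Lemma ge0_esumZl (T : choiceType) (a : T -> \bar R) (c : R) : (0 <= c)%R ->
  (forall i, 0 <= a i) ->
  \esum_(i in [set: T]) (c%:E * a i) = c%:E * \esum_(i in [set: T]) a i.
Proof.
move=> c0 a0; rewrite /esum -ereal_supZl //; last first.
  by apply/set0P; exists 0; exists set0; [exact: fsets_set0|rewrite fsbig_set0].
congr ereal_sup; apply/seteqP; split => y.
  move=> [X [finX XT] <-]; exists (\sum_(i \in X) a i); first by exists X.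
  by rewrite !fsbig_finite// ge0_sume_distrr.
move=> [z [X [finX XT] Xz] <-]; subst z; exists X => //.
by rewrite !fsbig_finite// ge0_sume_distrr.
Qed.

Lemma ge0_esumZr (T : choiceType) (a : T -> \bar R) (c : R) : (0 <= c)%R ->
  (forall i, 0 <= a i) ->
  \esum_(i in [set: T]) (a i * c%:E) = (\esum_(i in [set: T]) a i) * c%:E.
Proof.
move=> c0 a0; rewrite [RHS]muleC -ge0_esumZl//; apply: eq_esum => i _; exact: muleC.
Qed.

Lemma exchange_esum (T1 T2 : choiceType) (a : T1 -> T2 -> \bar R) :
  (forall i j, 0 <= a i j) ->
  \esum_(i in [set: T1]) \esum_(j in [set: T2]) a i j =
  \esum_(j in [set: T2]) \esum_(i in [set: T1]) a i j.
Proof.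
move=> a0; rewrite !(esum_esum (J := fun=> setT))//.
rewrite (reindex_esum ([set: T2] `*`` (fun=> [set: T1]))
  ([set: T1] `*`` (fun=> [set: T2])) (fun p => (p.2, p.1))) //.
split.
- by move=> [x y] _.
- by move=> [x y] [x' y'] _ _ /= [-> ->].
- by move=> [x y] _; exists (y, x).
Qed.

Lemma esum_delta (T : choiceType) (a : T -> \bar R) j :
  (forall i, i != j -> a i = 0) -> 0 <= a j -> \esum_(i in [set: T]) a i = a j.
Proof.
move=> aj aj0; rewrite (esumID [set j]); last first.
  by move=> i _; case: (eqVneq i j) => [->//|/aj ->].
rewrite setTI esum_set1// esum1 ?adde0// => i [_ /eqP ij]; exact: aj.
Qed.

Lemma esum_gt0_exists (T : choiceType) (a : T -> \bar R) :
  0 < \esum_(i in [set: T]) a i -> exists i, 0 < a i.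
Proof.
move=> h; apply/not_existsP => hn; move: h; apply/negP; rewrite -leNgt.
apply: ge_ereal_sup => _ [X [finX _] <-]; apply: fsume_le0 => // i _.
by rewrite leNgt; apply/negP => /(fun H => hn i H).
Qed.

Lemma esum_shift_le (a : nat -> \bar R) n : (forall t, 0 <= a t) ->
  \esum_(t in [set: nat]) a (n + t)%N <= \esum_(t in [set: nat]) a t.
Proof.
move=> a0.
rewrite -(reindex_esum [set: nat] [set t | (n <= t)%N] (addn n) a); last first.
  split.
  - by move=> t _ /=; rewrite leq_addr.
  - by move=> x y _ _ /= /addnI.
  - by move=> t /= nt; exists (t - n)%N => //; rewrite subnKC.
rewrite esum_mkcond; apply: le_esum => i _; case: ifP => _ //.
Qed.

End esum_lemmas.

Section taboo_chain.
Context {R : realType} {S : countType} {A : finType}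
  (P : S -> A -> S -> R) (pi : S -> A -> R) (z : S).
Hypothesis P_kernel : is_kernel P.
Hypothesis pi_policy : is_policy pi.

Local Notation PP := (P_pi P pi).
Local Notation tab := (taboo P pi z).

Lemma P_pi_ge0 x y : (0 <= PP x y)%R.
Proof.
by apply: sumr_ge0 => a _; apply: mulr_ge0; [exact: pi_policy.1|exact: P_kernel.1].
Qed.

Lemma P_pi_mass x : \esum_(y in [set: S]) (PP x y)%:E = 1.
Proof.
rewrite /P_pi; under eq_esum do rewrite -sumEFin.
rewrite esum_sum; last first.
  by move=> i j _ _; rewrite lee_fin mulr_ge0//; [exact: pi_policy.1|exact: P_kernel.1].
rewrite (eq_bigr (fun a => (pi x a)%:E)); first by rewrite sumEFin pi_policy.2.
move=> a _; under eq_esum do rewrite EFinM.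
rewrite ge0_esumZl; first by rewrite P_kernel.2 mule1.
  exact: pi_policy.1.
by move=> i; rewrite lee_fin; exact: P_kernel.1.
Qed.

Lemma P_pi_le1 x y : (PP x y <= 1)%R.
Proof.
rewrite -lee_fin -(P_pi_mass x); apply: (esum_ge_term (a := fun y => (PP x y)%:E)).
by move=> i; rewrite lee_fin P_pi_ge0.
Qed.

Definition killed_kernel (x w : S) : R := if w == z then 0%R else PP x w.

Local Notation Q := killed_kernel.

Lemma killed_kernel_ge0 x w : (0 <= Q x w)%R.
Proof. by rewrite /Q; case: ifP => // _; exact: P_pi_ge0. Qed.

Lemma killed_kernel_le x w : (Q x w <= PP x w)%R.
Proof. by rewrite /Q; case: ifP => // _; exact: P_pi_ge0. Qed.

Lemma killed_kernel_mass x : \esum_(w in [set: S]) (Q x w)%:E <= 1.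
Proof.
rewrite -(P_pi_mass x); apply: le_esum => w _; rewrite lee_fin; exact: killed_kernel_le.
Qed.

Lemma taboo_ge0 t x y : (0 <= tab t x y)%R.
Proof.
elim: t x y => [|t IH] x y /=; first by case: ifP.
case: ifP => // _; apply: fine_ge0; apply: esum_ge0 => w _.
by rewrite lee_fin mulr_ge0 ?IH ?P_pi_ge0.
Qed.

Definition taboo_step t x y := \esum_(w in [set: S]) (tab t x w * PP w y)%:E.

Lemma taboo_step_ge0 t x y : 0 <= taboo_step t x y.
Proof. by apply: esum_ge0 => w _; rewrite lee_fin mulr_ge0 ?taboo_ge0 ?P_pi_ge0. Qed.

Lemma taboo_step_le t x y :
  taboo_step t x y <= \esum_(w in [set: S]) (tab t x w)%:E.
Proof.
apply: le_esum => w _; rewrite lee_fin -[leRHS]mulr1 ler_wpM2l ?taboo_ge0//.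
exact: P_pi_le1.
Qed.

Lemma taboo_mass t x : \esum_(y in [set: S]) (tab t x y)%:E <= 1.
Proof.
elim: t x => [|t IH] x.
  rewrite (esum_delta (j := x)) /= ?eqxx//.
  by move=> i; rewrite eq_sym => /negPf ->.
apply: (@le_trans _ _ (\esum_(y in [set: S]) taboo_step t x y)).
  apply: le_esum => y _ /=; case: ifP => _; first exact: taboo_step_ge0.
  rewrite fineK// ge0_fin_numE ?taboo_step_ge0//.
  by rewrite (le_lt_trans (taboo_step_le _ _ _)) // (le_lt_trans (IH x)) ?ltry.
rewrite /taboo_step exchange_esum; last first.
  by move=> *; rewrite lee_fin mulr_ge0 ?taboo_ge0 ?P_pi_ge0.
apply: le_trans (IH x); apply: le_esum => w _.
under eq_esum do rewrite EFinM.
rewrite ge0_esumZl ?taboo_ge0// ?P_pi_mass ?mule1//.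
by move=> i; rewrite lee_fin P_pi_ge0.
Qed.

Lemma taboo_step_fin_num t x y : taboo_step t x y \is a fin_num.
Proof.
rewrite ge0_fin_numE ?taboo_step_ge0//.
by rewrite (le_lt_trans (taboo_step_le _ _ _)) // (le_lt_trans (taboo_mass _ _)) ?ltry.
Qed.

Lemma taboo_succ t x y :
  (tab t.+1 x y)%:E = if y == z then 0 else taboo_step t x y.
Proof. by rewrite /=; case: ifP => // _; rewrite fineK// taboo_step_fin_num. Qed.

(* The definition of [taboo] decomposes paths by their last step; this is
   the decomposition by the first step. *)
Lemma taboo_first_step t x y :
  (tab t.+1 x y)%:E = \esum_(w in [set: S]) (Q x w * tab t w y)%:E.
Proof.
elim: t x y => [|t IH] x y.
  rewrite taboo_succ /taboo_step /=.
  rewrite [RHS](esum_delta (j := y)); last first.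
  - by rewrite eqxx mulr1 lee_fin killed_kernel_ge0.
  - by move=> i /negPf ->; rewrite mulr0.
  rewrite eqxx mulr1 /Q; case: ifP => // _.
  rewrite (esum_delta (j := x)); first by rewrite eqxx mul1r.
    by move=> i; rewrite eq_sym => /negPf ->; rewrite mul0r.
  by rewrite eqxx mul1r lee_fin P_pi_ge0.
rewrite taboo_succ; under [RHS]eq_esum do rewrite EFinM taboo_succ.
case: ifP => yz; first by rewrite esum1 // => i _; rewrite mule0.
transitivity (\esum_(w in [set: S]) \esum_(v in [set: S])
   ((Q x v * tab t v w)%:E * (PP w y)%:E)).
  apply: eq_esum => w _; rewrite EFinM IH ge0_esumZr//; first exact: P_pi_ge0.
  by move=> i; rewrite lee_fin mulr_ge0 ?killed_kernel_ge0 ?taboo_ge0.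
rewrite exchange_esum; last first.
  by move=> i j; rewrite -EFinM lee_fin !mulr_ge0 ?killed_kernel_ge0 ?taboo_ge0 ?P_pi_ge0.
apply: eq_esum => v _.
under eq_esum do rewrite -EFinM -mulrA EFinM.
rewrite ge0_esumZl ?killed_kernel_ge0//.
by move=> i; rewrite lee_fin mulr_ge0 ?taboo_ge0 ?P_pi_ge0.
Qed.

Definition occupation_upto (g : S -> R) T x :=
  \sum_(0 <= t < T) \esum_(y in [set: S]) (tab t x y * g y)%:E.

Definition occupation (g : S -> R) x :=
  \esum_(t in [set: nat]) \esum_(y in [set: S]) (tab t x y * g y)%:E.

Section nonnegative_reward.
Variable g : S -> R.
Hypothesis g_ge0 : forall y, (0 <= g y)%R.

Lemma taboo_weighted_ge0 t x : 0 <= \esum_(y in [set: S]) (tab t x y * g y)%:E.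
Proof. by apply: esum_ge0 => y _; rewrite lee_fin mulr_ge0 ?taboo_ge0. Qed.

Lemma occupation_upto_ge0 T x : 0 <= occupation_upto g T x.
Proof. by apply: sume_ge0 => t _; exact: taboo_weighted_ge0. Qed.

Lemma occupation_ge0 x : 0 <= occupation g x.
Proof. by apply: esum_ge0 => t _; exact: taboo_weighted_ge0. Qed.

Lemma occupation_upto_le_occupation T x : occupation_upto g T x <= occupation g x.
Proof.
rewrite /occupation -nneseries_esumT; last by move=> t; exact: taboo_weighted_ge0.
by apply: nneseries_lim_ge => t _ _; exact: taboo_weighted_ge0.
Qed.

Lemma occupation_le x M : (forall T, occupation_upto g T x <= M) ->
  occupation g x <= M.
Proof.
move=> HM; rewrite /occupation -nneseries_esumT; last first.
  by move=> t; exact: taboo_weighted_ge0.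
apply: lime_le; first by apply: is_cvg_nneseries => t _ _; exact: taboo_weighted_ge0.
by apply: nearW => T; exact: HM.
Qed.

Lemma occupation_upto0 x : occupation_upto g 0 x = 0.
Proof. by rewrite /occupation_upto big_geq. Qed.

Lemma occupation_upto_succ T x : occupation_upto g T.+1 x =
  (g x)%:E + \esum_(w in [set: S]) ((Q x w)%:E * occupation_upto g T w).
Proof.
rewrite /occupation_upto big_nat_recl//; congr (_ + _).
  rewrite (esum_delta (j := x)) /= ?eqxx ?mul1r ?lee_fin//.
  by move=> i; rewrite eq_sym => /negPf ->; rewrite mul0r.
transitivity (\sum_(0 <= t < T) \esum_(w in [set: S])
   ((Q x w)%:E * \esum_(y in [set: S]) (tab t w y * g y)%:E)).
  apply: eq_bigr => t _.
  transitivity (\esum_(y in [set: S]) \esum_(w in [set: S])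
     ((Q x w * tab t w y)%:E * (g y)%:E)).
    apply: eq_esum => y _; rewrite EFinM taboo_first_step ge0_esumZr//.
    by move=> i; rewrite lee_fin mulr_ge0 ?killed_kernel_ge0 ?taboo_ge0.
  rewrite exchange_esum; last first.
    by move=> i j; rewrite -EFinM lee_fin !mulr_ge0 ?killed_kernel_ge0 ?taboo_ge0.
  apply: eq_esum => w _.
  under eq_esum do rewrite -EFinM -mulrA EFinM.
  rewrite ge0_esumZl ?killed_kernel_ge0//.
  by move=> i; rewrite lee_fin mulr_ge0 ?taboo_ge0.
rewrite -esum_sum; last first.
  by move=> w t _ _; rewrite mule_ge0 ?lee_fin ?killed_kernel_ge0 ?taboo_weighted_ge0.
apply: eq_esum => w _; rewrite ge0_sume_distrr//.
by move=> t _; exact: taboo_weighted_ge0.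
Qed.

End nonnegative_reward.

Lemma occupation_upto_drift (g h V : S -> R) :
  (forall y, (0 <= g y)%R) -> (forall y, (0 <= h y)%R) -> (forall y, (0 <= V y)%R) ->
  (forall x, (g x)%:E + \esum_(w in [set: S]) (Q x w * V w)%:E <= (V x)%:E + (h x)%:E) ->
  forall T x, occupation_upto g T x <= (V x)%:E + occupation_upto h T x.
Proof.
move=> g0 h0 V0 drift; elim=> [|T IH] x.
  by rewrite !occupation_upto0 adde0 lee_fin.
rewrite !occupation_upto_succ//.
have step : \esum_(w in [set: S]) ((Q x w)%:E * occupation_upto g T w) <=
    \esum_(w in [set: S]) (Q x w * V w)%:E +
    \esum_(w in [set: S]) ((Q x w)%:E * occupation_upto h T w).
  rewrite -esumD; last 2 first.
  - by move=> w _; rewrite lee_fin mulr_ge0 ?killed_kernel_ge0.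
  - by move=> w _; rewrite mule_ge0 ?lee_fin ?killed_kernel_ge0 ?occupation_upto_ge0.
  apply: le_esum => w _.
  rewrite EFinM -ge0_muleDr ?lee_fin// ?occupation_upto_ge0//.
  by apply: lee_wpmul2l; rewrite ?lee_fin ?killed_kernel_ge0// IH.
by apply: le_trans (leeD2l _ step) _; rewrite !addeA leeD2r.
Qed.

(* Before reaching B, h is not collected and Q has mass at most one. *)
Lemma occupation_upto_ubound (h : S -> R) (B : set S) (C : R) :
  (forall y, (0 <= h y)%R) -> (forall y, ~ B y -> h y = 0%R) -> (0 <= C)%R ->
  (forall x, B x -> occupation h x <= C%:E) ->
  forall T x, occupation_upto h T x <= C%:E.
Proof.
move=> h0 hB C0 HB; elim=> [|T IH] x; first by rewrite occupation_upto0 lee_fin.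
have [Bx|nBx] := pselect (B x).
  exact: le_trans (occupation_upto_le_occupation _ _ _) (HB x Bx).
rewrite occupation_upto_succ// hB// add0e.
apply: (@le_trans _ _ (\esum_(w in [set: S]) ((Q x w)%:E * C%:E))).
  by apply: le_esum => w _; apply: lee_wpmul2l; rewrite ?lee_fin ?killed_kernel_ge0.
rewrite ge0_esumZr//; last by move=> w; rewrite lee_fin killed_kernel_ge0.
by rewrite -[leRHS]mul1e lee_wpmul2r ?lee_fin// killed_kernel_mass.
Qed.

Lemma occupation_le_drift (g h V : S -> R) (B : set S) (C : R) :
  (forall y, (0 <= g y)%R) -> (forall y, (0 <= h y)%R) -> (forall y, (0 <= V y)%R) ->
  (forall x, (g x)%:E + \esum_(w in [set: S]) (Q x w * V w)%:E <= (V x)%:E + (h x)%:E) ->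
  (forall y, ~ B y -> h y = 0%R) -> (0 <= C)%R ->
  (forall x, B x -> occupation h x <= C%:E) ->
  forall x, occupation g x <= (V x + C)%:E.
Proof.
move=> g0 h0 V0 drift hB C0 HB x; apply: occupation_le => // T.
apply: le_trans (occupation_upto_drift g0 h0 V0 drift T x) _.
by rewrite EFinD leeD2l// (occupation_upto_ubound h0 hB C0 HB).
Qed.

Lemma occupation_le_exp_return_time (h : S -> R) M x :
  (forall y, (0 <= h y)%R) -> (forall y, (h y <= M)%R) -> (0 <= M)%R ->
  occupation h x <= M%:E * exp_return_time P pi z x.
Proof.
move=> h0 hM M0; rewrite /occupation /exp_return_time -ge0_esumZl//; last first.
  by move=> t; apply: esum_ge0 => y _; rewrite lee_fin taboo_ge0.
apply: le_esum => t _; rewrite -ge0_esumZl//; last by move=> y; rewrite lee_fin taboo_ge0.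
by apply: le_esum => y _; rewrite -EFinM lee_fin mulrC ler_wpM2r ?taboo_ge0.
Qed.

(* [w] is visited at time [n], before any return to [z], with probability at
   least [c] when starting from [z]; by the Markov property every taboo path
   from [w] then extends one from [z]. *)
Definition visited_before_return (w : S) := exists n (c : R), (0 < c)%R /\
  forall t y, (c * tab t w y <= tab (n + t)%N z y)%R.

Lemma visited_before_return_start : visited_before_return z.
Proof. by exists 0%N, 1%R; split => // t y; rewrite mul1r. Qed.

Lemma visited_before_return_step w v : visited_before_return w ->
  (0 < PP w v)%R -> v != z -> visited_before_return v.
Proof.
move=> [n [c [c0 Hc]]] Pwv vz; exists n.+1, (c * PP w v)%R; split.
  exact: mulr_gt0.
move=> t y; rewrite addSnnS; apply: le_trans (Hc t.+1 y).
rewrite -mulrA; apply: ler_wpM2l; first exact: ltW.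
rewrite -lee_fin taboo_first_step.
have -> : PP w v = Q w v by rewrite /Q (negPf vz).
apply: (esum_ge_term (a := fun w0 => (Q w w0 * tab t w0 y)%:E)).
by move=> i; rewrite lee_fin mulr_ge0 ?killed_kernel_ge0 ?taboo_ge0.
Qed.

Lemma visited_before_return_reachable n y :
  (0 < P_pi_n P pi n z y)%R -> visited_before_return y.
Proof.
elim: n y => [|n IH] y /=.
  by case: eqP => [<- _|_]; [exact: visited_before_return_start|rewrite ltxx].
set E := \esum_(w in [set: S]) _; case E_def: E => [e| |] //=; rewrite ?ltxx//.
move=> e0; have : 0 < E by rewrite E_def lte_fin.
move=> /esum_gt0_exists [w]; rewrite lte_fin => hw.
have Pw : (0 < PP w y)%R.
  rewrite lt_neqAle P_pi_ge0 andbT; apply/eqP => h0.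
  by move: hw; rewrite -h0 mulr0 ltxx.
have vw : visited_before_return w by apply: IH; rewrite -(pmulr_lgt0 _ Pw).
have [->|yz] := eqVneq y z; first exact: visited_before_return_start.
exact: visited_before_return_step vw Pw yz.
Qed.

Lemma exp_return_time_finite b : visited_before_return b ->
  exp_return_time P pi z z < +oo -> exp_return_time P pi z b < +oo.
Proof.
move=> [n [c [c0 Hc]]] Hz.
have mass_ge0 t x : 0 <= \esum_(y in [set: S]) (tab t x y)%:E.
  by apply: esum_ge0 => y _; rewrite lee_fin taboo_ge0.
have cb : c%:E * exp_return_time P pi z b <= exp_return_time P pi z z.
  rewrite /exp_return_time -ge0_esumZl ?(ltW c0)//.
  apply: le_trans _ (esum_shift_le (a := fun t => \esum_(y in [set: S]) (tab t z y)%:E)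
    n (mass_ge0^~ z)).
  apply: le_esum => t _; rewrite -ge0_esumZl ?(ltW c0)//; last first.
    by move=> y; rewrite lee_fin taboo_ge0.
  by apply: le_esum => y _; rewrite -EFinM lee_fin Hc.
have := le_lt_trans cb Hz.
have : 0 <= exp_return_time P pi z b by apply: esum_ge0 => t _; exact: mass_ge0.
case: (exp_return_time P pi z b) => [e _ _| _ |//]; first exact: ltry.
by rewrite gt0_muley ?lte_fin.
Qed.

Lemma occupation_fin_num (h : S -> R) M b :
  irreducible P pi -> exp_return_time P pi z z < +oo ->
  (forall y, (0 <= h y)%R) -> (forall y, (h y <= M)%R) -> (0 <= M)%R ->
  occupation h b \is a fin_num.
Proof.
move=> irr zrec h0 hM M0.
have [n hn] := irr z b.
have retb := exp_return_time_finite (visited_before_return_reachable hn) zrec.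
have ret0 : 0 <= exp_return_time P pi z b.
  by apply: esum_ge0 => t _; apply: esum_ge0 => y _; rewrite lee_fin taboo_ge0.
have retfin : exp_return_time P pi z b \is a fin_num by rewrite ge0_fin_numE.
rewrite ge0_fin_numE ?occupation_ge0//.
apply: le_lt_trans (occupation_le_exp_return_time b h0 hM M0) _.
by rewrite -(fineK retfin) -EFinM ltry.
Qed.

End taboo_chain.

Lemma finite_set_ubound (T : choiceType) (R : realType) (phi : T -> R) (B : set T) :
  finite_set B -> exists C, (0 <= C)%R /\ forall x, B x -> (phi x <= C)%R.
Proof.
move=> /finite_fsetP [F ->].
suff [C [C0 HC]] : exists C, (0 <= C)%R /\
    forall x, x \in finmap.enum_fset F -> (phi x <= C)%R.
  by exists C; split => // x /= xF; exact: HC.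
elim: (finmap.enum_fset F) => [|a s [C [C0 HC]]]; first by exists 0%R.
exists (Num.max C (phi a)); split; first by rewrite le_max C0.
move=> x; rewrite inE => /orP [/eqP ->|xs]; first by rewrite le_max lexx orbT.
by rewrite le_max HC.
Qed.

Local Close Scope ereal_scope.

Lemma posp_ge0 (R : realType) (x : R) : 0 <= posp x.
Proof. by rewrite /posp le_max lexx orbT. Qed.

Lemma negp_ge0 (R : realType) (x : R) : 0 <= negp x.
Proof. by rewrite /negp le_max lexx orbT. Qed.

Lemma r_pi_le_of_r_max_lt (R : realType) (S : countType) (A : finType)
  (r : S -> A -> R) (pi : S -> A -> R) (L : R) s :
  is_policy pi -> (r_max r s < L%:E)%E -> r_pi r pi s <= L.
Proof.
move=> hp rmax_lt; apply: (@le_trans _ _ (\sum_(a : A) pi s a * L)).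
  apply: ler_sum => a _; apply: ler_wpM2l; first exact: hp.1.
  rewrite -lee_fin ltW// (le_lt_trans _ rmax_lt)//.
  by rewrite /r_max (bigD1 a) //= le_max lexx.
by rewrite -mulr_suml hp.2 mul1r.
Qed.

Lemma rel_value_ge (R : realType) (S : countType) (A : finType)
  (P : S -> A -> S -> R) (r : S -> A -> R) (pi : S -> A -> R) (s0 : S) (J : R) x :
  is_kernel P -> is_policy pi ->
  (- occupation P pi s0 (fun y => negp (r_pi r pi y - J)) x
   <= rel_value P r pi s0 J x)%E.
Proof.
move=> hk hp; rewrite -[X in (X <= _)%E]add0e leeB//.
by apply: occupation_ge0 => // y; exact: posp_ge0.
Qed.

Section drift.
Context {R : realType} {S : countType} {A : finType}
  (P : S -> A -> S -> R) (r : S -> A -> R) (pi : S -> A -> R) (s0 : S)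
  (f : S -> R) (c1 c2 J : R).
Hypothesis P_kernel : is_kernel P.
Hypothesis pi_policy : is_policy pi.
Hypothesis f_ge0 : forall s, 0 <= f s.
Hypothesis c1_gt0 : 0 < c1.
Hypothesis f_drift : forall s,
  (\esum_(s' in [set: S]) (P_pi P pi s s' * f s')%:E - (f s)%:E
   <= (c1 * r_pi r pi s + c2)%:E)%E.

Local Notation rp := (r_pi r pi).

Lemma killed_scaled_drift x :
  (\esum_(w in [set: S]) (killed_kernel P pi s0 x w * (2 / c1 * f w))%:E
   <= (2 / c1 * f x + 2 * rp x + 2 / c1 * c2)%:E)%E.
Proof.
have c3_ge0 : 0 <= 2 / c1 by rewrite divr_ge0 // ltW.
have Pf_le : (\esum_(w in [set: S]) (P_pi P pi x w * f w)%:E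
    <= (c1 * rp x + c2 + f x)%:E)%E by rewrite EFinD -leeBlDr// f_drift.
apply: (@le_trans _ _ ((2 / c1)%:E * \esum_(w in [set: S]) (P_pi P pi x w * f w)%:E)%E).
  rewrite -ge0_esumZl//; last by move=> w; rewrite lee_fin mulr_ge0 ?P_pi_ge0.
  apply: le_esum => w _; rewrite -EFinM lee_fin mulrCA ler_wpM2l//.
  by rewrite ler_wpM2r ?killed_kernel_le.
apply: le_trans (lee_wpmul2l _ Pf_le) _; first by rewrite lee_fin.
rewrite -EFinM lee_fin mulrDr mulrDr mulrA mulfVK ?gt_eqF//; lra.
Qed.

(* Below the threshold [L] the reward is negative enough that the scaled
   drift pays for the negative part of [r - J] on its own. *)
Lemma negp_reward_drift (L M : R) :
  L <= J -> L <= - J - 2 / c1 * c2 ->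
  (forall y, (L%:E <= r_max r y)%E ->
     negp (rp y - J) + 2 * rp y + 2 / c1 * c2 <= M) ->
  forall x, ((negp (rp x - J))%:E +
   \esum_(w in [set: S]) (killed_kernel P pi s0 x w * (2 / c1 * f w))%:E
   <= (2 / c1 * f x)%:E
      + (if x \in [set y | (L%:E <= r_max r y)%E] then M else 0)%:E)%E.
Proof.
move=> LJ Lc2 HM x; apply: le_trans (leeD2l _ (killed_scaled_drift x)) _.
rewrite -!EFinD lee_fin.
case: ifPn => [/set_mem /HM|/negP xB]; first lra.
have rpL : rp x <= L.
  by apply: r_pi_le_of_r_max_lt => //; rewrite ltNge; apply/negP => /mem_set.
rewrite /negp opprB (max_idPl _); last by rewrite subr_ge0 (le_trans rpL).
lra.
Qed.

End drift.

Theorem mainTheorem6 (R : realType) (S : countType) (A : finType)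
  (P : S -> A -> S -> R) (r : S -> A -> R) (pi : S -> A -> R) (s0 : S)
  (mu : S -> R) (f : S -> R) (c1 c2 : R) :
  infinite_set [set: S] ->
  is_kernel P ->
  assumption1b r ->
  is_policy pi ->
  ergodic P pi ->
  stationary P pi mu ->
  (forall s, 0 <= f s) ->
  0 < c1 -> 0 <= c2 ->
  (forall s, (\esum_(s' in [set: S]) (P_pi P pi s s' * f s')%:E - (f s)%:E
              <= (c1 * r_pi r pi s + c2)%:E)%E) ->
  exists c3 c4 : R, 0 <= c3 /\ 0 <= c4 /\ c3 = 2 / c1 /\
    forall s, ((- c3 * f s - c4)%:E
               <= rel_value P r pi s0 (fine (avg_reward r pi mu)) s)%E.
Proof.
move=> _ hk h1b hp [irr [_ posrec]] _ f_ge0 c1_gt0 c2_ge0 drift.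
set J := fine (avg_reward r pi mu).
pose g y := negp (r_pi r pi y - J).
pose L := Num.min J (- J - 2 / c1 * c2).
have LJ : L <= J by rewrite ge_min lexx.
have Lc2 : L <= - J - 2 / c1 * c2 by rewrite ge_min lexx orbT.
pose B := [set s | (L%:E <= r_max r s)%E].
have [M [M_ge0 HM]] :=
  finite_set_ubound (fun y => g y + 2 * r_pi r pi y + 2 / c1 * c2) (h1b L).
pose h y := if y \in B then M else 0.
have h_ge0 y : 0 <= h y by rewrite /h; case: ifP.
have h_le y : h y <= M by rewrite /h; case: ifP.
have [C [C_ge0 HC]] := finite_set_ubound (fun b => fine (occupation P pi s0 h b)) (h1b L).
have occ_h_le b : B b -> (occupation P pi s0 h b <= C%:E)%E.
  move=> Bb; rewrite -(fineK (occupation_fin_num hk hp b irr (posrec s0) h_ge0 h_le M_ge0)).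
  by rewrite lee_fin HC.
have c3_ge0 : 0 <= 2 / c1 by rewrite divr_ge0 ?ltW.
have occ_g_le := occupation_le_drift hk hp (g := g) (V := fun y => 2 / c1 * f y)
  (fun y => negp_ge0 _) h_ge0 (fun y => mulr_ge0 c3_ge0 (f_ge0 y))
  (negp_reward_drift s0 hk hp f_ge0 c1_gt0 drift LJ Lc2 HM) _ C_ge0 occ_h_le.
exists (2 / c1), C; do 3!split => //.
move=> s; apply: le_trans (rel_value_ge r s0 J s hk hp).
rewrite mulNr -opprD EFinN leeN2 occ_g_le// => y nBy.
by rewrite /h memNset.
Qed.
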